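(* Let $k,l\geq 1$ be integers. Then $K(\mathbb{Z}_{2^l}^{2^k})$ is the trivial subgroup $\{(0,0,\dots,0)\}$ of $\mathbb{Z}_{2^l}^{2^k}$.
   Context: For integers $m\ge 2$, $n\ge 2$, the Ducci function $D:\mathbb{Z}_m^n\to\mathbb{Z}_m^n$ is $D(x_1,\dots,x_n)=(x_1+x_2 \bmod m,\dots,x_{n-1}+x_n\bmod m,x_n+x_1\bmod m)$. The Ducci cycle of $\mathbf{u}\in\mathbb{Z}_m^n$ is the set of $\mathbf{v}$ such that there exist integers $\alpha\ge 0$, $\beta\ge 1$ with $\mathbf{v}=D^{\alpha+\beta}(\mathbf{u})=D^{\alpha}(\mathbf{u})$. $K(\mathbb{Z}_m^n)$ denotes the set of all tuples in $\mathbb{Z}_m^n$ lying in the Ducci cycle of some $\mathbf{u}\in\mathbb{Z}_m^n$. *)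

From mathcomp Require Import all_boot all_algebra.
Set Implicit Arguments. Unset Strict Implicit. Unset Printing Implicit Defensive.
Import GRing.Theory.
Local Open Scope ring_scope.

Definition tup (m n : nat) := {ffun 'I_n -> 'Z_m}.

(* Ducci map: (x_1,...,x_n) |-> (x_1+x_2, ..., x_{n-1}+x_n, x_n+x_1) mod m.
   Index i (0-based) maps to x_i + x_{(i+1) mod n}; ordS gives the cyclic successor. *)
Definition ducci (m n : nat) (x : tup m n) : tup m n :=
  [ffun i : 'I_n => x i + x (ordS i)].

Definition in_ducci_cycle (m n : nat) (u v : tup m n) : Prop :=
  exists alpha beta : nat, (1 <= beta)%N /\
    v = iter (alpha + beta) (@ducci m n) u /\ v = iter alpha (@ducci m n) u.

Definition inK (m n : nat) (v : tup m n) : Prop :=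
  exists u : tup m n, in_ducci_cycle u v.

From mathcomp Require Import all_boot all_algebra.
Set Implicit Arguments. Unset Strict Implicit. Unset Printing Implicit Defensive.
Import GRing.Theory.
Local Open Scope ring_scope.

(* Write the Ducci map as D = 1 + S with S the cyclic shift, an additive map
   with S^n = 1.  Since (1 + S)^2 = 1 + S^2 + 2S, induction on j gives
   D^(2^j) = 1 + S^(2^j) modulo 2V; for n = 2^k this is 1 + S^n = 2 = 0, so
   D^n maps V into 2V and D^(n l) maps it into 2^l V = 0.  A nilpotent map has
   no nonzero periodic point. *)

Lemma iter_morph (T : Type) (f : T -> T) (op : T -> T -> T) (j : nat) :
  {morph f : x y / op x y} -> {morph iter j f : x y / op x y}.
Proof. by move=> fM; elim: j => [//|j IHj] x y /=; rewrite IHj fM. Qed.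

Lemma periodic_iter_const (T : Type) (f : T -> T) (a v : T) (N b : nat) :
  (forall x, iter N f x = a) -> (0 < b)%N -> iter b f v = v -> v = a.
Proof.
move=> fN b_gt0 vb.
have vNb : iter (N * b) f v = v by rewrite iterM iter_fix.
by rewrite -vNb -(subnKC (leq_pmulr N b_gt0)) iterD fN.
Qed.

Section AdditiveShift.

Variables (V : zmodType) (S D : V -> V).
Hypothesis S_additive : {morph S : x y / x + y}.
Hypothesis DE : forall x, D x = x + S x.

Let D_additive : {morph D : x y / x + y}.
Proof. by move=> x y; rewrite !DE S_additive addrACA. Qed.

Lemma iter_expn2_addS j x :
  exists y, iter (2 ^ j) D x = x + iter (2 ^ j) S x + y *+ 2.
Proof.
elim: j x => [|j IHj] x; first by exists 0; rewrite mul0rn addr0 /= DE.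
rewrite expnS !iterM /=.
have [y Ex] := IHj x; have [y' ETx] := IHj (iter (2 ^ j) S x).
set E := iter (2 ^ j) D in Ex ETx *; set T := iter (2 ^ j) S in Ex ETx *.
have E_additive : {morph E : x y / x + y} by apply: iter_morph.
exists (T x + y + y' + E y).
rewrite Ex !mulr2n !E_additive Ex ETx !mulr2n !addrA.
by rewrite [LHS](ACl (1*6*2*3*7*9*5*4*8*10)%AC).
Qed.

Variable k : nat.
Hypothesis S_period : forall x, iter (2 ^ k) S x = x.

Lemma iter_expn2_double x : exists y, iter (2 ^ k) D x = y *+ 2.
Proof.
have [y ->] := iter_expn2_addS k x.
by exists (x + y); rewrite S_period mulrnDl mulr2n.
Qed.

Lemma iter_expn2_mul t x : exists z, iter (2 ^ k * t) D x = z *+ 2 ^ t.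
Proof.
elim: t x => [|t IHt] x; first by exists x; rewrite muln0 expn0 mulr1n.
have [y Dx] := iter_expn2_double x; have [z Dy] := IHt y.
exists z; rewrite mulnSr iterD Dx mulr2n iter_morph // Dy.
by rewrite -mulrnDr addnn -mul2n -expnS.
Qed.

End AdditiveShift.

Lemma tup_mulrn_modulus (m n : nat) (x : tup m n) : (1 < m)%N -> x *+ m = 0.
Proof.
by move=> m_gt1; apply/ffunP=> i; rewrite ffunMnE ffunE -mulr_natr pchar_Zp ?mulr0.
Qed.

Section DucciShift.

Variables m n : nat.

Definition shift (x : tup m n) : tup m n := [ffun i => x (ordS i)].

Lemma ducciE (x : tup m n) : ducci x = x + shift x.
Proof. by apply/ffunP=> i; rewrite !ffunE. Qed.

Lemma shift_additive : {morph shift : x y / x + y}.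
Proof. by move=> x y; apply/ffunP=> i; rewrite !ffunE. Qed.

Lemma ducci0 : ducci (0 : tup m n) = 0.
Proof. by rewrite ducciE; apply/ffunP=> i; rewrite !ffunE addr0. Qed.

Lemma iter_ordS j (i : 'I_n) : val (iter j (@ordS n) i) = ((i + j) %% n)%N.
Proof.
elim: j => [|j IHj] /=; first by rewrite addn0 modn_small.
by rewrite IHj -addn1 modnDml addn1 addnS.
Qed.

Lemma iter_shift j (x : tup m n) : iter j shift x = [ffun i => x (iter j (@ordS n) i)].
Proof.
elim: j => [|j IHj]; apply/ffunP=> i; first by rewrite ffunE.
by rewrite [iter j.+1 _ _]/= !ffunE IHj ffunE iterSr.
Qed.

Lemma iter_shift_period (x : tup m n) : iter n shift x = x.
Proof.
rewrite iter_shift; apply/ffunP=> i; rewrite ffunE; congr (x _).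
by apply: val_inj; rewrite iter_ordS modnDr modn_small.
Qed.

Lemma ducci_cycle_periodic (u v : tup m n) :
  in_ducci_cycle u v -> exists2 b, (0 < b)%N & iter b (@ducci m n) v = v.
Proof.
case=> a [b [b_gt0 [vab va]]]; exists b => //.
by rewrite {1}va -iterD addnC -vab.
Qed.

End DucciShift.

Theorem corollary1p3 (k l : nat) (hk : (1 <= k)%N) (hl : (1 <= l)%N) :
  forall v : tup (2 ^ l) (2 ^ k), inK v <-> v = 0.
Proof.
have ducci_nilpotent (x : tup (2 ^ l) (2 ^ k)) : iter (2 ^ k * l) (@ducci _ _) x = 0.
  have [z ->] := iter_expn2_mul (@shift_additive _ _) (@ducciE _ _)
                   (@iter_shift_period _ _) l x.
  by rewrite tup_mulrn_modulus // -{1}(expn0 2) ltn_exp2l.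
move=> v; split; last first.
  by move->; exists 0, 0%N, 1%N; rewrite !iter_fix // ducci0.
case=> u /ducci_cycle_periodic [b b_gt0 vb].
exact: periodic_iter_const ducci_nilpotent b_gt0 vb.
Qed.
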